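(* Fix $\tilde r^2>0$ and $\tilde\sigma^2>0$. Let $C_1$ and $C_2$ be two limiting causal models in the same observational family, with parameters $(\omega_i^2,\eta_i)$, $i=1,2$, and confounding strengths $\zeta_i=(\omega_i^2+\eta_i)/\tilde r^2$. If $\zeta_1>\zeta_2$ and $\eta_1\le\eta_2$, then for all $\lambda,\gamma\in(0,\infty)$, $$\mathcal R^{C_1}_\lambda(\gamma)>\mathcal R^{C_2}_\lambda(\gamma).$$ In particular, for any fixed $\eta$ (for example $\eta=0$), the limiting causal risk at every $\lambda>0$ is strictly increasing in $\zeta$.
   Context: Setting: isotropic linear causal models $z\sim\mathcal N(0,I_l)$, $\varepsilon\sim\mathcal N(0,\sigma^2)$, $x=Mz$ with $MM^T=I_d$, and $y=x^T\beta+z^T\alpha+\varepsilon$. Write $\Gamma=M\alpha$ (the confounding parameter), $\tilde\beta=\beta+\Gamma$ (the statistical parameter) and $\tilde\sigma^2=\sigma^2+\|\alpha\|^2-\|\Gamma\|^2$. Asymptotically the model is summarized by $\|\beta\|^2=r^2$, $\|\Gamma\|^2=\omega^2$, $\langle\Gamma,\beta\rangle=\eta$ and $\tilde\sigma^2$, with $\tilde r^2=r^2+\omega^2+2\eta=\|\tilde\beta\|^2$. Observational family: models entailing the same observational distribution share $\tilde\beta$ and $\tilde\sigma^2$. Here this means fixed $\tilde r^2$ and $\tilde\sigma^2$, while $(\omega^2,\eta)$, and hence $r^2=\tilde r^2-\omega^2-2\eta$, may vary. Confounding strength: $\zeta=\langle\Gamma,\tilde\beta\rangle/\|\tilde\beta\|^2=(\omega^2+\eta)/\tilde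 r^2$. Limiting causal risk of ridge regression with parameter $\lambda>0$ at overparameterization ratio $\gamma=\lim d/n$: $$\mathcal R_\lambda(\gamma)=\omega^2+\tilde r^2\lambda^2m'(-\lambda)-2(\omega^2+\eta)\lambda m(-\lambda)+\tilde\sigma^2\gamma\big(m(-\lambda)-\lambda m'(-\lambda)\big)+\tilde\sigma^2+\omega^2,$$ where $m(z)=\frac{(1-\gamma-z)-\sqrt{(1-\gamma-z)^2-4\gamma z}}{2\gamma z}$ and $m'$ is its derivative. $\mathcal R^{C_i}_\lambda$ denotes this quantity computed with the parameters of $C_i$. *)

From Stdlib Require Import Reals.
From Coquelicot Require Import Coquelicot.
Open Scope R_scope.

(* Stieltjes transform of the Marchenko-Pastur law with ratio gamma,
   m(z) = ((1-g-z) - sqrt((1-g-z)^2 - 4 g z)) / (2 g z),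
   used only at z = -lambda < 0, where the discriminant is positive and
   the real square root is the intended branch. *)
Definition mMP (g z : R) : R :=
  ((1 - g - z) - sqrt ((1 - g - z)^2 - 4 * g * z)) / (2 * g * z).

Definition dmMP (g z : R) : R := Derive (fun t => mMP g t) z.

(* Limiting causal risk of ridge regression with penalty lambda at ratio g,
   for a model with parameters (rt2 = tilde r^2, om2 = omega^2, eta,
   st2 = tilde sigma^2). *)
Definition causal_risk (rt2 om2 eta st2 lam g : R) : R :=
  om2 + rt2 * lam^2 * dmMP g (- lam)
  - 2 * (om2 + eta) * lam * mMP g (- lam)
  + st2 * g * (mMP g (- lam) - lam * dmMP g (- lam))
  + st2 + om2.

Definition conf_strength (rt2 om2 eta : R) : R := (om2 + eta) / rt2.

(* (om2, eta) are the asymptotic parameters of a genuine (limiting) causal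
   model in the observational family with statistical signal rt2:
   omega^2 = |Gamma|^2 >= 0, r^2 = rt2 - om2 - 2 eta = |beta|^2 >= 0,
   and Cauchy-Schwarz <Gamma,beta>^2 <= |Gamma|^2 |beta|^2. *)
Definition valid_model (rt2 om2 eta : R) : Prop :=
  0 <= om2 /\ 0 <= rt2 - om2 - 2 * eta /\
  eta^2 <= om2 * (rt2 - om2 - 2 * eta).

From Stdlib Require Import Reals Lra Psatz.
From Coquelicot Require Import Coquelicot.
Open Scope R_scope.

(* Within an observational family only the terms 2 omega^2 and
   -2 (omega^2 + eta) lambda m(-lambda) of the risk vary, so the risks of two
   models differ by 2 Delta (1 - lambda m(-lambda)) + 2 (eta2 - eta1), where
   Delta = rt2 (zeta1 - zeta2).  It remains to see lambda m(-lambda) < 1: with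
   D = (1-g+lambda)^2 + 4 g lambda the discriminant, lambda m(-lambda) equals
   (sqrt D - (1-g+lambda)) / (2g), and D < (1+g+lambda)^2. *)

Lemma lam_mMP_opp (g lam : R) : 0 < g -> 0 < lam ->
  lam * mMP g (- lam) =
  (sqrt ((1 - g + lam)^2 + 4 * g * lam) - (1 - g + lam)) / (2 * g).
Proof.
  intros Hg Hl; unfold mMP.
  replace ((1 - g - - lam)^2 - 4 * g * - lam)
    with ((1 - g + lam)^2 + 4 * g * lam) by ring.
  field; lra.
Qed.

Lemma lam_mMP_lt1 (g lam : R) : 0 < g -> 0 < lam -> lam * mMP g (- lam) < 1.
Proof.
  intros Hg Hl; rewrite lam_mMP_opp by assumption.
  assert (Hsqrt : sqrt ((1 - g + lam)^2 + 4 * g * lam) < 1 + g + lam).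
  { rewrite <- (sqrt_pow2 (1 + g + lam)) by lra.
    apply sqrt_lt_1_alt; split; [pose proof (pow2_ge_0 (1 - g + lam)); nra | nra]. }
  apply Rmult_lt_reg_r with (2 * g); [lra |].
  unfold Rdiv; rewrite Rmult_assoc, Rinv_l by lra; lra.
Qed.

Lemma causal_risk_sub (rt2 st2 om1 eta1 om2 eta2 lam g : R) :
  causal_risk rt2 om1 eta1 st2 lam g - causal_risk rt2 om2 eta2 st2 lam g =
  2 * ((om1 + eta1) - (om2 + eta2)) * (1 - lam * mMP g (- lam))
  + 2 * (eta2 - eta1).
Proof. unfold causal_risk; ring. Qed.

Lemma conf_strength_lt (rt2 om1 eta1 om2 eta2 : R) : 0 < rt2 ->
  conf_strength rt2 om2 eta2 < conf_strength rt2 om1 eta1 ->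
  om2 + eta2 < om1 + eta1.
Proof.
  intros Hr; unfold conf_strength, Rdiv.
  apply Rmult_lt_reg_r, Rinv_0_lt_compat, Hr.
Qed.

Theorem proposition2 (rt2 st2 om1 eta1 om2 eta2 : R) :
  0 < rt2 -> 0 < st2 ->
  valid_model rt2 om1 eta1 -> valid_model rt2 om2 eta2 ->
  conf_strength rt2 om1 eta1 > conf_strength rt2 om2 eta2 ->
  eta1 <= eta2 ->
  forall lam g : R, 0 < lam -> 0 < g ->
    causal_risk rt2 om1 eta1 st2 lam g > causal_risk rt2 om2 eta2 st2 lam g.
Proof.
  intros Hr _ _ _ Hzeta Heta lam g Hl Hg.
  pose proof (conf_strength_lt rt2 om1 eta1 om2 eta2 Hr Hzeta) as Hsignal.
  pose proof (lam_mMP_lt1 g lam Hg Hl) as Hm.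
  apply Rminus_gt; rewrite causal_risk_sub.
  assert (Hprod : 0 < 2 * ((om1 + eta1) - (om2 + eta2)) * (1 - lam * mMP g (- lam))).
  { apply Rmult_lt_0_compat; lra. }
  lra.
Qed.
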